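(* Let $P$ be a monotone irreducible positive recurrent stochastic kernel on $\mathbb{N}=\{1,2,\dots\}$ with stationary distribution $\pi$. Let $X=(X_n)_{n\ge0}$ be the Markov chain with kernel $P$ and, for $N\ge1$, $\tau_{(N)}=\inf\{n\ge 0: X_n\ge N\}$. Then $$\forall\, y,z\in\mathbb{N}:\quad \lim_{n,N\to\infty}\frac{\mathbb{P}_y(\tau_{(N)}>n)}{\mathbb{P}_z(\tau_{(N)}>n)}=1,$$ where the limit is taken jointly as both $n\to\infty$ and $N\to\infty$.
   Context: A stochastic kernel $P$ on $\mathbb{N}$ is monotone if for every $y\in\mathbb{N}$ the map $x\mapsto\sum_{z\le y}P(x,z)$ is decreasing in $x$. $\mathbb{P}_x$ denotes the law of the chain started at $x$. The stationary distribution $\pi$ satisfies $\pi(i)>0$, $\sum_i\pi(i)=1$, $\pi' P=\pi'$. *)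

From Stdlib Require Import Reals Arith.
From Coquelicot Require Import Coquelicot.
Open Scope R_scope.

(* States: the natural numbers.  The paper's state space {1,2,...} is
   relabelled as {0,1,...} (x |-> x-1). *)

Fixpoint fsum (f : nat -> R) (n : nat) : R :=
  match n with
  | O => 0
  | S k => fsum f k + f k
  end.

Definition stochastic (P : nat -> nat -> R) : Prop :=
  (forall x y, 0 <= P x y) /\ (forall x, is_series (fun y => P x y) 1).

Definition monotone_kernel (P : nat -> nat -> R) : Prop :=
  forall y x x', (x <= x')%nat ->
    fsum (P x') (S y) <= fsum (P x) (S y).

Inductive leads_to (P : nat -> nat -> R) : nat -> nat -> Prop :=
  | leads_refl x : leads_to P x x
  | leads_step x y z : 0 < P x y -> leads_to P y z -> leads_to P x z.

Definition irreducible (P : nat -> nat -> R) : Prop :=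
  forall x y, leads_to P x y.

Definition stationary_distribution (P : nat -> nat -> R) (pi : nat -> R) : Prop :=
  (forall i, 0 < pi i) /\ is_series pi 1 /\
  (forall j, is_series (fun i => pi i * P i j) (pi j)).

(* surv P N n x = P_x(tau_(N) > n) where tau_(N) = inf{n >= 0 : X_n >= N}:
   the probability that X_0, ..., X_n all lie in {0,...,N-1}
   (Markov property: computed by iterating the kernel killed outside {< N}). *)
Fixpoint surv (P : nat -> nat -> R) (N n x : nat) : R :=
  match n with
  | O => if Nat.ltb x N then 1 else 0
  | S k => if Nat.ltb x N then fsum (fun z => P x z * surv P N k z) N else 0
  end.

(* Stopping the chain at y gives, for every start z,
     P_z(tau_(N) > n) >= P_z(y is hit before tau_(N), within n steps) * P_y(tau_(N) > n),
   so it suffices that this hitting probability tends to 1 as n, N -> oo.  It is at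
   least P_z(tau_(N) > n0) - P_z(X avoids y up to n0 inside {< N}).  The first term tends
   to 1 as N -> oo for fixed n0.  The second is small for large n0, uniformly in N: a
   positive-probability path from y to z avoiding y bounds it by a multiple of the
   probability that an excursion from y avoids y for n0 steps, and stationarity of pi
   gives the truncated Kac inequality  n0 * pi(y) * P_y(excursion longer than n0) <= 1.
   Irreducibility also keeps P_z(tau_(N) > n) positive, so the ratio is well defined. *)

From Stdlib Require Import Reals Lra Lia Classical.
From Coquelicot Require Import Coquelicot.
Open Scope R_scope.

Lemma fsum_ext f g n :
  (forall k, (k < n)%nat -> f k = g k) -> fsum f n = fsum g n.
Proof.
  induction n as [|n IH]; intros Hfg; simpl; [reflexivity|].
  rewrite IH by (intros; apply Hfg; lia); rewrite Hfg by lia; reflexivity.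
Qed.

Lemma fsum_le f g n :
  (forall k, (k < n)%nat -> f k <= g k) -> fsum f n <= fsum g n.
Proof.
  induction n as [|n IH]; intros Hfg; simpl; [lra|].
  apply Rplus_le_compat; [apply IH; intros; apply Hfg|apply Hfg]; lia.
Qed.

Lemma fsum_nonneg f n : (forall k, 0 <= f k) -> 0 <= fsum f n.
Proof.
  intros Hf; induction n as [|n IH]; simpl; [lra|].
  specialize (Hf n); lra.
Qed.

Lemma fsum_incr f m n :
  (forall k, 0 <= f k) -> (m <= n)%nat -> fsum f m <= fsum f n.
Proof.
  intros Hf Hmn; induction Hmn as [|n _ IH]; simpl; [lra|].
  specialize (Hf n); lra.
Qed.

Lemma fsum_ge_term f n k :
  (forall j, 0 <= f j) -> (k < n)%nat -> f k <= fsum f n.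
Proof.
  intros Hf Hk.
  apply Rle_trans with (fsum f (S k)); [|apply fsum_incr; auto].
  simpl; pose proof (fsum_nonneg f k Hf); lra.
Qed.

Lemma fsum_scal_l c f n : fsum (fun k => c * f k) n = c * fsum f n.
Proof. induction n as [|n IH]; simpl; [|rewrite IH]; ring. Qed.

Lemma fsum_plus f g n : fsum (fun k => f k + g k) n = fsum f n + fsum g n.
Proof. induction n as [|n IH]; simpl; [|rewrite IH]; ring. Qed.

Lemma fsum_remove f n y :
  (y < n)%nat -> fsum f n = fsum (fun k => if Nat.eqb k y then 0 else f k) n + f y.
Proof.
  induction n as [|n IH]; intros Hy; [lia|]; simpl.
  destruct (Nat.eq_dec y n) as [->|Hne].
  - rewrite Nat.eqb_refl, (fsum_ext (fun k => if Nat.eqb k n then 0 else f k) f n); [ring|].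
    intros k Hk; replace (Nat.eqb k n) with false by (symmetry; apply Nat.eqb_neq; lia).
    reflexivity.
  - replace (Nat.eqb n y) with false by (symmetry; apply Nat.eqb_neq; lia).
    rewrite IH by lia; ring.
Qed.

Lemma sum_n_fsum (a : nat -> R) m : sum_n a m = fsum a (S m).
Proof.
  induction m as [|m IH]; [rewrite sum_O; simpl; ring|].
  rewrite sum_Sn, IH; reflexivity.
Qed.

Lemma is_series_zero : is_series (fun _ : nat => 0) 0.
Proof.
  apply (filterlim_ext (fun _ => 0)); [|apply filterlim_const].
  intros n; symmetry; apply (sum_n_m_const_zero (G := R_AbelianMonoid)).
Qed.

Lemma is_series_fsum (a : nat -> nat -> R) (b : nat -> R) N :
  (forall w, is_series (fun x => a x w) (b w)) ->
  is_series (fun x => fsum (a x) N) (fsum b N).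
Proof.
  intros Hab; induction N as [|N IH]; simpl; [apply is_series_zero|].
  apply (is_series_plus _ _ _ _ IH (Hab N)).
Qed.

Lemma is_series_fsum_le a l n :
  (forall k, 0 <= a k) -> is_series a l -> fsum a n <= l.
Proof.
  intros Ha Hl.
  apply Rle_trans with (fsum a (S n)); [apply fsum_incr; auto|].
  rewrite <- sum_n_fsum; apply (is_lim_seq_incr_compare _ _ Hl).
  intros m; rewrite sum_Sn; rewrite <- (Rplus_0_r (sum_n a m)) at 1.
  apply Rplus_le_compat_l, Ha.
Qed.

Lemma is_series_fsum_ge a l eps :
  0 < eps -> is_series a l -> exists M, forall m, (M <= m)%nat -> l - eps <= fsum a m.
Proof.
  intros Heps Hl; apply (is_lim_seq_spec (sum_n a) l) in Hl.
  destruct (Hl (mkposreal _ Heps)) as [M HM]; exists (S M); intros m Hm.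
  destruct m as [|m]; [lia|].
  specialize (HM m ltac:(lia)); simpl in HM; rewrite sum_n_fsum in HM.
  apply Rabs_lt_between' in HM; lra.
Qed.

Lemma decreasing_pos_of_return (f : nat -> R) a k :
  Un_decreasing f -> 0 < a -> (forall m, a * f m <= f (m + S k)%nat) ->
  0 < f O -> forall n, 0 < f n.
Proof.
  intros Hdec Ha Hret H0 n; induction n as [|n IH]; [exact H0|].
  apply Rlt_le_trans with (f (n + S k)%nat).
  - specialize (Hret n); nra.
  - apply decreasing_prop; [exact Hdec|lia].
Qed.

Lemma eventually_forall_lt (Q : nat -> nat -> Prop) M :
  (forall w, (w < M)%nat -> eventually (fun N => Q N w)) ->
  eventually (fun N => forall w, (w < M)%nat -> Q N w).
Proof.
  induction M as [|M IH]; intros HQ.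
  - apply filter_forall; intros N w Hw; lia.
  - apply (filter_imp (fun N => (forall w, (w < M)%nat -> Q N w) /\ Q N M)).
    + intros N [Hlt HM] w Hw.
      destruct (Nat.eq_dec w M) as [->|Hne]; [exact HM|apply Hlt; lia].
    + apply filter_and; [apply IH; intros; apply HQ; lia|apply HQ; lia].
Qed.

Lemma ratio_near_one a b d :
  0 <= a -> 0 < b -> 0 <= d <= 1/2 ->
  (1 - d) * a <= b -> (1 - d) * b <= a -> Rabs (a / b - 1) <= 2 * d.
Proof.
  intros Ha Hb Hd Hab Hba.
  set (r := a / b); assert (Har : a = r * b) by (unfold r; field; lra).
  rewrite Har in Hab, Hba.
  assert (Hr1 : 1 - d <= r) by (apply Rmult_le_reg_r with b; lra).
  assert (Hr2 : (1 - d) * r <= 1) by (apply Rmult_le_reg_r with b; lra).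
  apply Rabs_le; split; nra.
Qed.

Definition below (N : nat) : nat -> bool := fun u => Nat.ltb u N.

Definition avoid (D : nat -> bool) (y : nat) : nat -> bool :=
  fun u => andb (D u) (negb (Nat.eqb u y)).

Section KilledChain.

Variable P : nat -> nat -> R.

(* [stay D N n x] is P_x(X_0, ..., X_n all in D) and [reach D N y n x] is
   P_x(y is visited within n steps, all earlier states lying in D); both are
   exact only for D contained in {0, ..., N-1}, since jumps are summed over
   targets below N. *)
Fixpoint stay (D : nat -> bool) (N n x : nat) : R :=
  match n with
  | O => if D x then 1 else 0
  | S k => if D x then fsum (fun z => P x z * stay D N k z) N else 0
  end.

Fixpoint reach (D : nat -> bool) (N y n x : nat) : R :=
  match n with
  | O => if Nat.eqb x y then 1 else 0
  | S k => if Nat.eqb x y then 1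
           else if D x then fsum (fun w => P x w * reach D N y k w) N else 0
  end.

Inductive walk (Q : nat -> Prop) : nat -> nat -> Prop :=
  | walk_refl x : Q x -> walk Q x x
  | walk_step x w z : Q x -> 0 < P x w -> walk Q w z -> walk Q x z.

Lemma surv_stay N n x : surv P N n x = stay (below N) N n x.
Proof.
  revert x; induction n as [|n IH]; intros x; simpl; [reflexivity|].
  unfold below at 1; destruct (Nat.ltb x N); [|reflexivity].
  apply fsum_ext; intros; rewrite IH; reflexivity.
Qed.

Lemma reach_self D N y n : reach D N y n y = 1.
Proof. destruct n; simpl; rewrite Nat.eqb_refl; reflexivity. Qed.

Lemma walk_start Q x z : walk Q x z -> Q x.
Proof. destruct 1; assumption. Qed.

Lemma walk_end Q x z : walk Q x z -> Q z.
Proof. induction 1; assumption. Qed.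

Lemma walk_weaken (Q Q' : nat -> Prop) x z :
  (forall u, Q u -> Q' u) -> walk Q x z -> walk Q' x z.
Proof.
  intros HQ; induction 1; [apply walk_refl|apply walk_step with w]; auto.
Qed.

Lemma walk_bounded Q x z :
  walk Q x z -> exists B, walk (fun u => Q u /\ (u <= B)%nat) x z.
Proof.
  induction 1 as [x Hx|x w z Hx Hxw _ [B HB]].
  - exists x; apply walk_refl; auto.
  - exists (Nat.max B x); apply walk_step with w; [split; auto; lia|auto|].
    apply walk_weaken with (fun u => Q u /\ (u <= B)%nat); [|exact HB].
    intros u [Hu HuB]; split; [exact Hu|lia].
Qed.

Lemma leads_to_walk x z : leads_to P x z -> walk (fun _ => True) x z.
Proof.
  induction 1; [apply walk_refl|apply walk_step with y]; auto.
Qed.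

Lemma walk_last_exit y x z :
  walk (fun _ => True) x z -> z <> y ->
  walk (fun u => u <> y) x z \/
  exists w, 0 < P y w /\ walk (fun u => u <> y) w z.
Proof.
  induction 1 as [x _|x w z _ Hxw _ IH]; intros Hzy; [left; apply walk_refl; auto|].
  destruct (IH Hzy) as [Hw|Hw]; [|right; exact Hw].
  destruct (Nat.eq_dec x y) as [->|Hxy]; [right; exists w; auto|].
  left; apply walk_step with w; auto.
Qed.

Lemma leads_to_first_step y z :
  leads_to P y z -> z <> y ->
  exists w, 0 < P y w /\ walk (fun u => u <> y) w z.
Proof.
  intros Hyz Hzy.
  destruct (walk_last_exit y y z (leads_to_walk y z Hyz) Hzy) as [H|H]; [|exact H].
  exfalso; exact (walk_start _ _ _ H eq_refl).
Qed.

Hypothesis HP : stochastic P.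

Lemma row_fsum_le1 x N : fsum (P x) N <= 1.
Proof. apply is_series_fsum_le; [apply HP|apply HP]. Qed.

Lemma row_has_pos x : exists w, 0 < P x w.
Proof.
  apply NNPP; intros Hnone.
  assert (Hzero : is_series (fun _ : nat => 0) 1).
  { apply is_series_ext with (P x); [|apply HP].
    intros w; destruct (proj1 HP x w) as [Hw|Hw]; [|auto].
    exfalso; apply Hnone; exists w; exact Hw. }
  pose proof (is_series_unique _ _ Hzero); pose proof (is_series_unique _ _ is_series_zero).
  lra.
Qed.

Lemma stay_nonneg D N n x : 0 <= stay D N n x.
Proof.
  revert x; induction n as [|n IH]; intros x; simpl; destruct (D x); try lra.
  apply fsum_nonneg; intros z; apply Rmult_le_pos; [apply HP|apply IH].
Qed.

Lemma stay_le1 D N n x : stay D N n x <= 1.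
Proof.
  revert x; induction n as [|n IH]; intros x; simpl; destruct (D x); try lra.
  apply Rle_trans with (fsum (P x) N); [|apply row_fsum_le1].
  apply fsum_le; intros z _.
  pose proof (proj1 HP x z); specialize (IH z); nra.
Qed.

Lemma stay_decreasing D N x : Un_decreasing (fun n => stay D N n x).
Proof.
  intros n; revert x; induction n as [|n IH]; intros x.
  - simpl; destruct (D x); [|lra].
    apply Rle_trans with (fsum (P x) N); [|apply row_fsum_le1].
    apply fsum_le; intros z _; pose proof (proj1 HP x z); destruct (D z); nra.
  - change (stay D N (S (S n)) x) with
      (if D x then fsum (fun z => P x z * stay D N (S n) z) N else 0).
    change (stay D N (S n) x) with
      (if D x then fsum (fun z => P x z * stay D N n z) N else 0).
    destruct (D x); [|lra].
    apply fsum_le; intros z _; pose proof (proj1 HP x z); specialize (IH z); nra.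
Qed.

Lemma stay_step_ge D N n x w :
  D x = true -> (w < N)%nat -> P x w * stay D N n w <= stay D N (S n) x.
Proof.
  intros Hx Hw; simpl; rewrite Hx.
  apply (fsum_ge_term (fun z => P x z * stay D N n z)); [|exact Hw].
  intros z; apply Rmult_le_pos; [apply HP|apply stay_nonneg].
Qed.

Lemma reach_nonneg D N y n x : 0 <= reach D N y n x.
Proof.
  revert x; induction n as [|n IH]; intros x; simpl; destruct (Nat.eqb x y); try lra.
  destruct (D x); [|lra].
  apply fsum_nonneg; intros w; apply Rmult_le_pos; [apply HP|apply IH].
Qed.

Lemma reach_growing D N y x : Un_growing (fun n => reach D N y n x).
Proof.
  intros n; revert x; induction n as [|n IH]; intros x.
  - simpl; destruct (Nat.eqb x y); [lra|]; destruct (D x); [|lra].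
    apply fsum_nonneg; intros w; pose proof (proj1 HP x w); destruct (Nat.eqb w y); lra.
  - change (reach D N y (S (S n)) x) with (if Nat.eqb x y then 1
      else if D x then fsum (fun w => P x w * reach D N y (S n) w) N else 0).
    change (reach D N y (S n) x) with (if Nat.eqb x y then 1
      else if D x then fsum (fun w => P x w * reach D N y n w) N else 0).
    destruct (Nat.eqb x y); [lra|]; destruct (D x); [|lra].
    apply fsum_le; intros w _; pose proof (proj1 HP x w); specialize (IH w); nra.
Qed.

Lemma stay_walk_lower Q x z :
  walk Q x z -> exists k c, 0 < c /\
  forall D N, (forall u, Q u -> D u = true /\ (u < N)%nat) ->
  forall n, c * stay D N n z <= stay D N (n + k) x.
Proof.
  induction 1 as [x _|x w z Hx Hxw Hwz [k [c [Hc IH]]]].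
  - exists O, 1; split; [lra|]; intros D N _ n; rewrite Nat.add_0_r; lra.
  - exists (S k), (P x w * c); split; [nra|]; intros D N HQ n.
    specialize (IH D N HQ n).
    rewrite Nat.add_succ_r.
    apply Rle_trans with (P x w * stay D N (n + k) w); [nra|].
    apply stay_step_ge; [apply HQ, Hx|apply HQ, (walk_start _ _ _ Hwz)].
Qed.

Lemma stay_reach_le D N y n x :
  reach D N y n x * stay D N n y <= stay D N n x.
Proof.
  revert x; induction n as [|n IH]; intros x.
  - simpl; destruct (Nat.eqb_spec x y) as [->|_]; [lra|].
    destruct (D y), (D x); lra.
  - destruct (Nat.eqb_spec x y) as [->|Hxy]; [rewrite reach_self; lra|].
    pose proof (stay_decreasing D N y n) as Hdec.
    change (reach D N y (S n) x) with (if Nat.eqb x y then 1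
      else if D x then fsum (fun w => P x w * reach D N y n w) N else 0).
    change (stay D N (S n) x) with
      (if D x then fsum (fun z => P x z * stay D N n z) N else 0).
    rewrite (proj2 (Nat.eqb_neq x y) Hxy).
    destruct (D x); [|pose proof (stay_nonneg D N (S n) y); lra].
    apply Rle_trans with (fsum (fun w => P x w * reach D N y n w) N * stay D N n y).
    + apply Rmult_le_compat_l; [|exact Hdec].
      apply fsum_nonneg; intros w; apply Rmult_le_pos; [apply HP|apply reach_nonneg].
    + rewrite Rmult_comm, <- fsum_scal_l; apply fsum_le; intros w _.
      specialize (IH w); pose proof (proj1 HP x w); nra.
Qed.

Lemma stay_le_reach_avoid D N y n x :
  stay D N n x <= reach D N y n x + stay (avoid D y) N n x.
Proof.
  revert x; induction n as [|n IH]; intros x.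
  - simpl; unfold avoid; destruct (Nat.eqb x y), (D x); simpl; lra.
  - destruct (Nat.eqb_spec x y) as [->|Hxy].
    + rewrite reach_self; pose proof (stay_le1 D N (S n) y).
      pose proof (stay_nonneg (avoid D y) N (S n) y); lra.
    + change (reach D N y (S n) x) with (if Nat.eqb x y then 1
        else if D x then fsum (fun w => P x w * reach D N y n w) N else 0).
      simpl stay; unfold avoid at 1.
      rewrite (proj2 (Nat.eqb_neq x y) Hxy), Bool.andb_true_r.
      destruct (D x); [|lra].
      rewrite <- fsum_plus; apply fsum_le; intros w _.
      specialize (IH w); pose proof (proj1 HP x w); nra.
Qed.

Lemma stay_below_eventually_ge n x eps :
  0 < eps -> eventually (fun N => 1 - eps <= stay (below N) N n x).
Proof.
  revert x eps; induction n as [|n IH]; intros x eps Heps.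
  - exists (S x); intros N HN; simpl; unfold below.
    rewrite (proj2 (Nat.ltb_lt x N)) by lia; lra.
  - destruct (is_series_fsum_ge (P x) 1 (eps / 2) ltac:(lra) (proj2 HP x)) as [M HM].
    specialize (HM M (le_n M)).
    pose proof (row_fsum_le1 x M) as HM1.
    assert (Hlarge : eventually (fun N => (S x <= N)%nat /\ (M <= N)%nat)).
    { exists (Nat.max (S x) M); intros N HN; split; lia. }
    generalize (filter_and _ _ Hlarge
      (eventually_forall_lt (fun N w => 1 - eps / 2 <= stay (below N) N n w) M
         (fun w _ => IH w (eps / 2) ltac:(lra)))).
    apply filter_imp; intros N [[HxN HMN] Hw]; simpl; unfold below at 1.
    rewrite (proj2 (Nat.ltb_lt x N)) by lia.
    apply Rle_trans with (fsum (fun z => P x z * stay (below N) N n z) M).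
    + apply Rle_trans with (fsum (fun z => (1 - eps / 2) * P x z) M).
      * rewrite fsum_scal_l; nra.
      * apply fsum_le; intros z Hz; pose proof (proj1 HP x z); specialize (Hw z Hz); nra.
    + apply fsum_incr; [|exact HMN].
      intros z; apply Rmult_le_pos; [apply HP|apply stay_nonneg].
Qed.

Lemma stay_ratio_near_one D N n y z d :
  0 <= d <= 1/2 -> 1 - d <= reach D N y n z -> 1 - d <= reach D N z n y ->
  0 < stay D N n z -> Rabs (stay D N n y / stay D N n z - 1) <= 2 * d.
Proof.
  intros Hd Hyz Hzy Hz.
  pose proof (stay_reach_le D N y n z); pose proof (stay_reach_le D N z n y).
  pose proof (stay_nonneg D N n y).
  apply ratio_near_one; [auto|auto|auto|nra|nra].
Qed.

Hypothesis Hirr : irreducible P.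

Lemma stay_below_eventually_pos z :
  eventually (fun N => forall n, 0 < stay (below N) N n z).
Proof.
  destruct (row_has_pos z) as [w Hzw].
  destruct (walk_bounded _ _ _ (leads_to_walk w z (Hirr w z))) as [B HB].
  destruct (stay_walk_lower _ _ _ HB) as [k [c [Hc Hlow]]].
  exists (S B); intros N HN.
  assert (HQ : forall u, True /\ (u <= B)%nat -> below N u = true /\ (u < N)%nat).
  { intros u [_ Hu]; unfold below; rewrite (proj2 (Nat.ltb_lt u N)) by lia.
    split; [reflexivity|lia]. }
  assert (HzN : below N z = true) by (apply HQ, (walk_end _ _ _ HB)).
  apply (decreasing_pos_of_return _ (P z w * c) k).
  - apply stay_decreasing.
  - nra.
  - intros m; rewrite Nat.add_succ_r.
    apply Rle_trans with (P z w * stay (below N) N (m + k) w).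
    + specialize (Hlow _ _ HQ m); nra.
    + apply stay_step_ge; [exact HzN|apply HQ, (walk_start _ _ _ HB)].
  - simpl; rewrite HzN; lra.
Qed.

End KilledChain.

Section Stationary.

Variables (P : nat -> nat -> R) (pi : nat -> R).
Hypothesis HP : stochastic P.
Hypothesis Hpi : stationary_distribution P pi.

Lemma stationary_fsum_le f N :
  (forall w, 0 <= f w) ->
  fsum (fun x => pi x * fsum (fun w => P x w * f w) N) N
  <= fsum (fun w => pi w * f w) N.
Proof.
  intros Hf; destruct Hpi as [Hpos [_ Hstat]].
  apply is_series_fsum_le.
  - intros x; apply Rmult_le_pos; [left; apply Hpos|].
    apply fsum_nonneg; intros w; apply Rmult_le_pos; [apply HP|apply Hf].
  - apply is_series_ext with (fun x => fsum (fun w => pi x * P x w * f w) N).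
    + intros x; rewrite <- fsum_scal_l; apply fsum_ext; intros; ring.
    + apply (is_series_fsum (fun x w => pi x * P x w * f w)); intros w.
      apply (is_series_scal_r (f w) (fun x => pi x * P x w)), Hstat.
Qed.

Section Kac.

Variables N y : nat.
Hypothesis HyN : (y < N)%nat.

Local Notation Dy := (avoid (below N) y).

Lemma mass_avoid_step k :
  fsum (fun x => pi x * stay P Dy N (S k) x) N
  + pi y * fsum (fun w => P y w * stay P Dy N k w) N
  <= fsum (fun x => pi x * stay P Dy N k x) N.
Proof.
  set (g := fun x => fsum (fun w => P x w * stay P Dy N k w) N).
  apply Rle_trans with (fsum (fun x => pi x * g x) N).
  - rewrite (fsum_remove (fun x => pi x * g x) N y HyN).
    apply Rplus_le_compat_r, Req_le, fsum_ext; intros x Hx.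
    simpl stay; unfold avoid, below; rewrite (proj2 (Nat.ltb_lt x N) Hx); simpl.
    destruct (Nat.eqb x y); simpl; [ring|reflexivity].
  - apply stationary_fsum_le; intros w; apply stay_nonneg, HP.
Qed.

(* Telescoping [mass_avoid_step]: the excursion tail is non-increasing and the
   stationary mass is at most 1. *)
Lemma kac_bound M :
  pi y * INR M * fsum (fun w => P y w * stay P Dy N M w) N <= 1.
Proof.
  set (mass := fun k => fsum (fun x => pi x * stay P Dy N k x) N).
  set (exc := fun k => fsum (fun w => P y w * stay P Dy N k w) N).
  destruct Hpi as [Hpos [Hsum _]]; pose proof (Hpos y) as Hpy.
  assert (Hexc : forall k, 0 <= exc (S k) <= exc k).
  { intros k; split.
    - apply fsum_nonneg; intros w; apply Rmult_le_pos; [apply HP|apply stay_nonneg, HP].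
    - apply fsum_le; intros w _; pose proof (proj1 HP y w).
      pose proof (stay_decreasing P HP Dy N w k); nra. }
  assert (Htele : forall m, mass m + pi y * INR m * exc m <= mass O).
  { induction m as [|m IH]; [simpl; lra|].
    pose proof (mass_avoid_step m) as Hstep; fold (mass m) (mass (S m)) (exc m) in Hstep.
    pose proof (pos_INR m); specialize (Hexc m); rewrite S_INR.
    assert (pi y * (INR m + 1) * exc (S m) <= pi y * (INR m + 1) * exc m)
      by (apply Rmult_le_compat_l; nra).
    nra. }
  assert (Hmass : 0 <= mass M).
  { apply fsum_nonneg; intros x; apply Rmult_le_pos; [left; apply Hpos|apply stay_nonneg, HP]. }
  assert (Hmass0 : mass O <= 1).
  { apply Rle_trans with (fsum pi N).
    - apply fsum_le; intros x _; simpl; destruct (Dy x); pose proof (Hpos x); lra.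
    - apply is_series_fsum_le; [intros; left; apply Hpos|exact Hsum]. }
  specialize (Htele M); fold (exc M); lra.
Qed.

End Kac.

Hypothesis Hirr : irreducible P.

Lemma stay_avoid_eventually_small y z d :
  z <> y -> 0 < d ->
  exists n0, eventually (fun N => stay P (avoid (below N) y) N n0 z <= d).
Proof.
  intros Hzy Hd.
  destruct (leads_to_first_step P y z (Hirr y z) Hzy) as [w [Hyw Hwz]].
  destruct (walk_bounded P _ _ _ Hwz) as [B HB].
  destruct (stay_walk_lower P HP _ _ _ HB) as [k [c [Hc Hlow]]].
  pose proof (proj1 Hpi y) as Hpy.
  set (C := pi y * P y w * c).
  assert (HC : 0 < C) by (unfold C; repeat apply Rmult_lt_0_compat; auto).
  destruct (INR_unbounded (1 / (C * d))) as [n0 Hn0].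
  exists n0, (S (Nat.max B y)); intros N HN.
  set (Dy := avoid (below N) y).
  assert (HQ : forall u, u <> y /\ (u <= B)%nat -> Dy u = true /\ (u < N)%nat).
  { intros u [Huy HuB]; unfold Dy, avoid, below.
    rewrite (proj2 (Nat.ltb_lt u N)), (proj2 (Nat.eqb_neq u y) Huy) by lia.
    split; [reflexivity|lia]. }
  specialize (Hlow Dy N HQ n0).
  set (v := stay P Dy N n0 z) in *.
  set (exc := fsum (fun u => P y u * stay P Dy N (n0 + k) u) N).
  assert (Hterm : P y w * stay P Dy N (n0 + k) w <= exc).
  { apply (fsum_ge_term (fun u => P y u * stay P Dy N (n0 + k) u)).
    - intros u; apply Rmult_le_pos; [apply HP|apply stay_nonneg, HP].
    - apply HQ, (walk_start _ _ _ _ HB). }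
  assert (Hkac : pi y * INR (n0 + k) * exc <= 1) by (apply kac_bound; lia).
  assert (HCv : C * INR n0 * v <= 1).
  { assert (Hexc : P y w * (c * v) <= exc).
    { pose proof (stay_nonneg P HP Dy N (n0 + k) w); nra. }
    assert (0 <= P y w * (c * v)) by (assert (0 <= v) by apply stay_nonneg, HP;
      apply Rmult_le_pos; [lra|apply Rmult_le_pos; lra]).
    pose proof (le_INR n0 (n0 + k) ltac:(lia)); pose proof (pos_INR n0).
    replace (C * INR n0 * v) with (pi y * INR n0 * (P y w * (c * v))) by (unfold C; ring).
    apply Rle_trans with (pi y * INR n0 * exc); [apply Rmult_le_compat_l; nra|].
    apply Rle_trans with (pi y * INR (n0 + k) * exc); [|exact Hkac].
    apply Rmult_le_compat_r; nra. }
  assert (HCd : 1 < C * d * INR n0).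
  { apply Rmult_lt_compat_l with (r := C * d) in Hn0; [|nra].
    replace (C * d * (1 / (C * d))) with 1 in Hn0 by (field; lra); lra. }
  apply Rnot_lt_le; intros Hv; nra.
Qed.

Lemma reach_eventually_ge y z d :
  0 < d ->
  filter_prod eventually eventually
    (fun nN : nat * nat => 1 - d <= reach P (below (snd nN)) (snd nN) y (fst nN) z).
Proof.
  intros Hd.
  destruct (Nat.eq_dec z y) as [->|Hzy].
  { apply filter_forall; intros nN; rewrite reach_self; lra. }
  destruct (stay_avoid_eventually_small y z (d / 2) Hzy ltac:(lra)) as [n0 Hsmall].
  apply Filter_prod with (fun n => (n0 <= n)%nat)
    (fun N => stay P (avoid (below N) y) N n0 z <= d / 2
              /\ 1 - d / 2 <= stay P (below N) N n0 z).
  - exists n0; auto.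
  - apply filter_and; [exact Hsmall|apply stay_below_eventually_ge; [exact HP|lra]].
  - intros n N Hn [Havoid Hstay]; simpl.
    pose proof (stay_le_reach_avoid P HP (below N) N y n0 z).
    pose proof (growing_prop _ n n0 (reach_growing P HP (below N) N y z) Hn).
    lra.
Qed.

End Stationary.

Theorem lemma2 (P : nat -> nat -> R) (pi : nat -> R) :
  stochastic P -> monotone_kernel P -> irreducible P ->
  stationary_distribution P pi ->
  forall y z : nat,
    filterlim (fun nN : nat * nat => surv P (snd nN) (fst nN) y / surv P (snd nN) (fst nN) z)
      (filter_prod eventually eventually) (locally 1).
Proof.
  intros HP _ Hirr Hpi y z.
  apply filterlim_locally; intros [eps Heps].
  set (d := Rmin (1/2) (eps/4)).
  assert (Hd : 0 < d <= 1/2) by (split; [apply Rmin_glb_lt|apply Rmin_l]; lra).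
  assert (Hdeps : 2 * d < eps) by (assert (d <= eps/4) by apply Rmin_r; lra).
  assert (Hsurv_pos : filter_prod eventually eventually
            (fun nN : nat * nat => forall n, 0 < stay P (below (snd nN)) (snd nN) n z)).
  { apply (filterlim_snd (F := eventually) (fun N => forall n, 0 < stay P (below N) N n z)).
    apply stay_below_eventually_pos; assumption. }
  generalize (filter_and _ _ (reach_eventually_ge P pi HP Hpi Hirr y z d (proj1 Hd))
               (filter_and _ _ (reach_eventually_ge P pi HP Hpi Hirr z y d (proj1 Hd)) Hsurv_pos)).
  apply filter_imp; intros [n N] [Hyz [Hzy Hpos]]; simpl in *.
  rewrite !surv_stay.
  change (Rabs (stay P (below N) N n y / stay P (below N) N n z - 1) < eps).
  apply Rle_lt_trans with (2 * d); [|exact Hdeps].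
  apply stay_ratio_near_one; auto; lra.
Qed.
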